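(* Consider the continuous-time LPV system $$\dot x(t)=A(\rho)x(t)+B(\rho)u(t),\qquad y(t)=C(\rho)x(t),$$ with $x\in\mathbb{R}^n$, $u\in\mathbb{R}^m$, $y\in\mathbb{R}^p$, time-varying parameter $\rho(t)\in\Omega\subset\mathbb{R}^r$, and $A,B,C$ polynomial or rational in $\rho$. Assume it is given in the differential-algebraic representation (DAR) $$\dot x=A_1x+A_2\pi+A_3u,\qquad y=C_1x+C_2\pi,\qquad 0=\Upsilon_1(\rho)x+\Upsilon_2(\rho)\pi+\Upsilon_3(\rho)u,$$ as described in the context, with vertex matrices $\Upsilon_{1_i},\Upsilon_{2_i},\Upsilon_{3_i}$, $i=1,\dots,N$, and set $C_{d_i}=\begin{bmatrix}\Upsilon_{1_i}&\Upsilon_{2_i}&\Upsilon_{3_i}\end{bmatrix}$. Let a scalar $\beta$ be given. Suppose there exist symmetric matrices $P\succ0$ ($n\times n$), $H_i\succ0$ ($n\times n$), $R\succ0$ ($m\times m$), $Q_i$ ($p\times p$), matrices $S_i\in\mathbb{R}^{p\times m}$ ($i=1,\dots,N$), and a matrix $L\in\mathbb{R}^{(n+n_\pi+m)\times n_\pi}$ such that, for all $i=1,\dots,N$, $$Y_i+LC_{d_i}+C_{d_i}^\top L^\top\prec0,\qquad X_{d_i}+L_sC_{s_i}+C_{s_i}^\top L_s^\top\prec0,$$ where $$Y_i=\begin{bmatrix}PA_1+A_1^\top P-C_1^\top Q_iC_1+H_i&\star&\star\\ (PA_2-C_1^\top Q_iC_2)^\top&-C_2^\top Q_iC_2&\star\\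 (PA_3-C_1^\top S_i)^\top&-S_i^\top C_2&-R\end{bmatrix},\quad X_{d_i}=\begin{bmatrix}Q_i&S_i\\ S_i^\top&R\end{bmatrix},$$ $C_{s_i}=\begin{bmatrix}S_i^\top&R\end{bmatrix}$, and $L_s\in\mathbb{R}^{(p+m)\times m}$ is defined by $L_s^\top=\begin{bmatrix}\beta\mathbf{1}_{m\times p}&-I_m\end{bmatrix}$. Then the system is robust strictly QSR-dissipative for all $\rho(t)\in\Omega$ (with storage function $V(x)=x^\top Px$, $T(x,\rho)=x^\top H(\rho)x$, $H(\rho)=\sum_i\alpha_iH_i$, and supply-rate matrices $Q(\rho)=\sum_i\alpha_iQ_i$, $S(\rho)=\sum_i\alpha_iS_i$, $R$), and the gain-scheduled static output feedback $$u=K(\rho)y,\qquad K(\rho)=\sum_{i=1}^N\alpha_i(\rho)K_i,\qquad K_i=-R^{-1}S_i^\top,$$ asymptotically stabilizes the system around the origin for all $\rho\in\Omega$.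
   Context: Standing assumption: the parameter vector $\rho(t)\in\mathbb{R}^r$ is bounded and lies in a polytope $\Omega$ with $N=2^r$ vertices; every $\rho\in\Omega$ is written as a convex combination of the vertices with weights $\alpha(\rho)=(\alpha_1,\dots,\alpha_N)$, $\alpha_i\ge0$, $\sum_i\alpha_i=1$. DAR: $\pi=\pi(x,\rho,u)\in\mathbb{R}^{n_\pi}$ is an auxiliary vector collecting the terms depending nonlinearly on $\rho$; $A_1\in\mathbb{R}^{n\times n}$, $A_2\in\mathbb{R}^{n\times n_\pi}$, $A_3\in\mathbb{R}^{n\times m}$, $C_1\in\mathbb{R}^{p\times n}$, $C_2\in\mathbb{R}^{p\times n_\pi}$ are constant; $\Upsilon_1(\rho)\in\mathbb{R}^{n_\pi\times n}$, $\Upsilon_2(\rho)\in\mathbb{R}^{n_\pi\times n_\pi}$, $\Upsilon_3(\rho)\in\mathbb{R}^{n_\pi\times m}$ are affine in $\rho$, with $\Upsilon_2(\rho)$ invertible, and the DAR is an exact representation of the LPV system (eliminating $\pi$ via the algebraic equation recovers $A(\rho),B(\rho),C(\rho)$). Being affine, $\Upsilon_k(\rho)=\sum_{i=1}^N\alpha_i\Upsilon_{k_i}$, where $\Upsilon_{k_i}$ is the value at the $i$-th vertex. Notation: $\star$ denotes blocks determined by symmetry; $\mathbf{1}$ is an all-ones matrix. Robust strict QSR-dissipativity: with $V(x)=x^\top Px$, $T(x,\rho)=x^\top H(\rho)x$, the system is robust strictly QSR-dissipative if for all $\rho\in\Omega$ and all $(x,\pi,u)$ satisfying the DAR algebraic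 constraint, $t_d(x,u,\rho):=\nabla V^\top[A_1x+A_2\pi+A_3u]+x^\top H(\rho)x-y^\top Q(\rho)y-2y^\top S(\rho)u-u^\top Ru\le0$, where $y=C_1x+C_2\pi$. *)

From HB Require Import structures.
From mathcomp Require Import all_boot all_order all_algebra.
From mathcomp Require Import all_classical all_reals all_analysis.
Set Implicit Arguments. Unset Strict Implicit. Unset Printing Implicit Defensive.
Import Order.TTheory GRing.Theory Num.Theory.
Import numFieldNormedType.Exports.
Local Open Scope classical_set_scope.
Local Open Scope ring_scope.

Definition qf {R : realType} {k l : nat} (u : 'cV[R]_k) (M : 'M[R]_(k, l))
  (v : 'cV[R]_l) : R := (u^T *m M *m v) 0 0.

Definition posdef {R : realType} {k : nat} (M : 'M[R]_k) : Prop :=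
  M^T = M /\ forall v : 'cV[R]_k, v != 0 -> 0 < qf v M v.
Definition negdef {R : realType} {k : nat} (M : 'M[R]_k) : Prop :=
  M^T = M /\ forall v : 'cV[R]_k, v != 0 -> qf v M v < 0.

Definition ccomb {R : realType} {N k l : nat} (a : 'I_N -> R)
  (M : 'I_N -> 'M[R]_(k, l)) : 'M[R]_(k, l) := \sum_(i < N) a i *: M i.

Definition affine_in {R : realType} {r k l : nat} (F : 'rV[R]_r -> 'M[R]_(k, l))
  : Prop :=
  exists (M0 : 'M[R]_(k, l)) (M : 'I_r -> 'M[R]_(k, l)),
    forall rho, F rho = M0 + \sum_(j < r) rho 0 j *: M j.

(* Robust strict QSR-dissipativity of the DAR, with V(x) = x^T P x,
   T(x,rho) = x^T H(rho) x; grad V = (P + P^T) x. *)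
Definition robust_strict_QSR_dissipative {R : realType} {r n npi m p : nat}
  (Omega : set 'rV[R]_r)
  (A1 : 'M[R]_n) (A2 : 'M[R]_(n, npi)) (A3 : 'M[R]_(n, m))
  (C1 : 'M[R]_(p, n)) (C2 : 'M[R]_(p, npi))
  (U1 : 'rV[R]_r -> 'M[R]_(npi, n)) (U2 : 'rV[R]_r -> 'M[R]_npi)
  (U3 : 'rV[R]_r -> 'M[R]_(npi, m))
  (P : 'M[R]_n) (H : 'rV[R]_r -> 'M[R]_n) (Q : 'rV[R]_r -> 'M[R]_p)
  (S : 'rV[R]_r -> 'M[R]_(p, m)) (Rm : 'M[R]_m) : Prop :=
  forall rho, Omega rho ->
  forall (x : 'cV[R]_n) (pi : 'cV[R]_npi) (u : 'cV[R]_m),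
    U1 rho *m x + U2 rho *m pi + U3 rho *m u = 0 ->
    let y := C1 *m x + C2 *m pi in
    qf ((P + P^T) *m x) 1%:M (A1 *m x + A2 *m pi + A3 *m u)
    + qf x (H rho) x - qf y (Q rho) y - 2 * qf y (S rho) u - qf u Rm u <= 0.

Definition lpv_solution {R : realType} {r n : nat} (Omega : set 'rV[R]_r)
  (M : 'rV[R]_r -> 'M[R]_n) (rho : R -> 'rV[R]_r) (x : R -> 'cV[R]_n) : Prop :=
  (forall t : R, 0 <= t -> Omega (rho t)) /\
  {within [set t : R | 0 <= t], continuous x} /\
  (forall t : R, 0 < t -> is_derive t (1 : R) x (M (rho t) *m x t)).

Definition lpv_asymptotically_stable {R : realType} {r n : nat}
  (Omega : set 'rV[R]_r) (M : 'rV[R]_r -> 'M[R]_n) : Prop :=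
  (forall e : R, 0 < e -> exists2 d : R, 0 < d &
     forall rho x, lpv_solution Omega M rho x -> `|x 0| < d ->
       forall t : R, 0 <= t -> `|x t| < e) /\
  (forall rho x, lpv_solution Omega M rho x -> x t @[t --> +oo] --> (0 : 'cV[R]_n)).

From HB Require Import structures.
From mathcomp Require Import all_boot all_order all_algebra.
From mathcomp Require Import all_classical all_reals all_analysis.
From mathcomp Require Import ring lra.
Set Implicit Arguments. Unset Strict Implicit. Unset Printing Implicit Defensive.
Import Order.TTheory GRing.Theory Num.Theory.
Import numFieldNormedType.Exports.
Local Open Scope classical_set_scope.
Local Open Scope ring_scope.

(* Testing the first vertex LMI on xi = (x, pi, u) gives, at each vertex, t_d plus
   the multiplier term 2 (L^T xi).(C_d_i xi).  Averaged with the weights alpha(rho),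
   the multiplier terms add up to 2 (L^T xi).(C_d(rho) xi), which vanishes on the DAR
   constraint because C_d is affine in rho; t_d is affine in (H, Q, S), hence
   t_d(rho) <= 0.  The second LMI tested at (y, beta 1 y), where L_s^T vanishes, makes
   the supply rate nonpositive at u = beta 1 y.  As a function of u the supply rate is
   a strictly convex quadratic (R > 0) minimised at u = -R^-1 S(rho)^T y = K(rho) y, so
   it is nonpositive in closed loop, and dissipativity yields
   d/dt x^T P x <= -x^T H(rho) x <= -h |x|^2.  By compactness of the unit sphere
   x^T P x is comparable to |x|^2, and the classical Lyapunov argument concludes. *)

Section DotProduct.
Variable R : realType.

Definition dot k (u v : 'cV[R]_k) : R := (u^T *m v) 0 0.

Lemma qfE k l (u : 'cV[R]_k) (M : 'M[R]_(k, l)) v : qf u M v = dot u (M *m v).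
Proof. by rewrite /qf /dot mulmxA. Qed.

Lemma dotC k (u v : 'cV[R]_k) : dot u v = dot v u.
Proof. by rewrite /dot -[v^T *m u]trmxK trmx_mul trmxK [in RHS]mxE. Qed.

Lemma dot_mull k l (M : 'M[R]_(k, l)) u v : dot (M *m u) v = dot u (M^T *m v).
Proof. by rewrite /dot trmx_mul mulmxA. Qed.

Lemma dot_mulr k l (M : 'M[R]_(l, k)) u v : dot u (M *m v) = dot (M^T *m u) v.
Proof. by rewrite dot_mull trmxK. Qed.

Lemma dot_trmx_mulr k l (M : 'M[R]_(k, l)) u v : dot u (M^T *m v) = dot (M *m u) v.
Proof. by rewrite dot_mulr trmxK. Qed.

Lemma dotDl k (u w v : 'cV[R]_k) : dot (u + w) v = dot u v + dot w v.
Proof. by rewrite /dot linearD mulmxDl mxE. Qed.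

Lemma dotDr k (u w v : 'cV[R]_k) : dot v (u + w) = dot v u + dot v w.
Proof. by rewrite /dot mulmxDr mxE. Qed.

Lemma dotNl k (u v : 'cV[R]_k) : dot (- u) v = - dot u v.
Proof. by rewrite /dot linearN mulNmx mxE. Qed.

Lemma dotNr k (u v : 'cV[R]_k) : dot v (- u) = - dot v u.
Proof. by rewrite /dot mulmxN mxE. Qed.

Lemma dotZl k a (u v : 'cV[R]_k) : dot (a *: u) v = a * dot u v.
Proof. by rewrite /dot linearZ -scalemxAl mxE. Qed.

Lemma dotZr k a (u v : 'cV[R]_k) : dot v (a *: u) = a * dot v u.
Proof. by rewrite /dot -scalemxAr mxE. Qed.

Lemma dot0r k (v : 'cV[R]_k) : dot v 0 = 0.
Proof. by rewrite /dot mulmx0 mxE. Qed.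

Lemma dot0l k (v : 'cV[R]_k) : dot 0 v = 0.
Proof. by rewrite dotC dot0r. Qed.

Lemma dot_col_mx k l (a c : 'cV[R]_k) (b d : 'cV[R]_l) :
  dot (col_mx a b) (col_mx c d) = dot a c + dot b d.
Proof. by rewrite /dot tr_col_mx mul_row_col mxE. Qed.

Lemma qf0l k l (M : 'M[R]_(k, l)) v : qf 0 M v = 0.
Proof. by rewrite qfE dot0l. Qed.

Lemma qfZ k (M : 'M[R]_k) a v : qf (a *: v) M (a *: v) = a ^+ 2 * qf v M v.
Proof. by rewrite !qfE -scalemxAr dotZl dotZr mulrA expr2. Qed.

Lemma qf_trmx k l (M : 'M[R]_(k, l)) u v : qf u M^T v = qf v M u.
Proof. by rewrite !qfE dot_trmx_mulr dotC. Qed.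

Lemma qf_ccomb N k l (a : 'I_N -> R) (M : 'I_N -> 'M[R]_(k, l)) u v :
  qf u (ccomb a M) v = \sum_i a i * qf u (M i) v.
Proof.
rewrite /ccomb qfE mulmx_suml /dot mulmx_sumr summxE.
by apply: eq_bigr => i _; rewrite -scalemxAl -scalemxAr mxE qfE.
Qed.

Lemma qf_add_sym_mulmx k l (Y : 'M[R]_k) (L : 'M[R]_(k, l)) (C : 'M[R]_(l, k)) z :
  qf z (Y + L *m C + C^T *m L^T) z = qf z Y z + 2 * qf (L^T *m z) C z.
Proof.
rewrite !qfE !mulmxDl !dotDr -!mulmxA [dot z (L *m _)]dot_mulr.
by rewrite [dot z (C^T *m _)]dot_mulr trmxK [dot (C *m z) _]dotC; ring.
Qed.

Lemma qf_block_sym k l (A : 'M[R]_k) (B : 'M[R]_(l, k)) (D : 'M[R]_l) a b :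
  qf (col_mx a b) (block_mx A B^T B D) (col_mx a b) =
  qf a A a + 2 * qf b B a + qf b D b.
Proof.
rewrite !qfE mul_block_col dot_col_mx !dotDr dot_trmx_mulr [dot (B *m a) b]dotC.
ring.
Qed.

Lemma qf_mulmx_sym k (A P : 'M[R]_k) v :
  qf (A *m v) P v + qf v P (A *m v) = qf ((P + P^T) *m v) 1%:M (A *m v).
Proof. by rewrite !qfE mul1mx mulmxDl dotDl dotC [dot v _]dot_mulr. Qed.

End DotProduct.

Lemma negdef_qf_le0 (R : realType) k (M : 'M[R]_k) v : negdef M -> qf v M v <= 0.
Proof.
by case=> _ neg; have [->|/neg/ltW//] := eqVneq v 0; rewrite qf0l.
Qed.

Lemma posdef_qf_ge0 (R : realType) k (M : 'M[R]_k) v : posdef M -> 0 <= qf v M v.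
Proof.
by case=> _ pos; have [->|/pos/ltW//] := eqVneq v 0; rewrite qf0l.
Qed.

Lemma convex_sum_ge (R : realType) N (a f : 'I_N -> R) b :
  (forall i, 0 <= a i) -> \sum_i a i = 1 -> (forall i, b <= f i) ->
  b <= \sum_i a i * f i.
Proof.
move=> a_ge0 sum_a le_b; rewrite -[b]mul1r -sum_a mulr_suml.
by apply: ler_sum => i _; exact: ler_wpM2l.
Qed.

Lemma ccomb_affine_in (R : realType) r N k l (F : 'rV[R]_r -> 'M[R]_(k, l))
    (a : 'I_N -> R) (vtx : 'I_N -> 'rV[R]_r) rho :
  affine_in F -> \sum_i a i = 1 -> rho = ccomb a vtx ->
  ccomb a (fun i => F (vtx i)) = F rho.
Proof.
move=> [M0 [M FE]] sum_a ->; rewrite /ccomb FE.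
under eq_bigr do rewrite FE scalerDr scaler_sumr.
rewrite big_split /= -scaler_suml sum_a scale1r; congr (_ + _).
rewrite exchange_big /=; apply: eq_bigr => j _.
by rewrite summxE scaler_suml; apply: eq_bigr => i _; rewrite scalerA mxE.
Qed.

Definition supply_rate (R : realType) p m (Q : 'M[R]_p) (S : 'M[R]_(p, m))
    (Rm : 'M[R]_m) (y : 'cV[R]_p) (u : 'cV[R]_m) : R :=
  qf y Q y + 2 * qf y S u + qf u Rm u.

Section DissipationRate.
Variables (R : realType) (n npi m p : nat).
Variables (A1 : 'M[R]_n) (A2 : 'M[R]_(n, npi)) (A3 : 'M[R]_(n, m)).
Variables (C1 : 'M[R]_(p, n)) (C2 : 'M[R]_(p, npi)) (P : 'M[R]_n) (Rm : 'M[R]_m).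

(* Literally the body of [robust_strict_QSR_dissipative], which therefore unfolds to
   [dissipation_rate ... <= 0]. *)
Definition dissipation_rate (H : 'M[R]_n) (Q : 'M[R]_p) (S : 'M[R]_(p, m))
    (x : 'cV[R]_n) (pi : 'cV[R]_npi) (u : 'cV[R]_m) : R :=
  let y := C1 *m x + C2 *m pi in
  qf ((P + P^T) *m x) 1%:M (A1 *m x + A2 *m pi + A3 *m u)
  + qf x H x - qf y Q y - 2 * qf y S u - qf u Rm u.

Definition dissipation_lmi (H : 'M[R]_n) (Q : 'M[R]_p) (S : 'M[R]_(p, m)) :
    'M[R]_(n + (npi + m)) :=
  let Y11 := P *m A1 + A1^T *m P - C1^T *m Q *m C1 + H in
  let Y21 := (P *m A2 - C1^T *m Q *m C2)^T in
  let Y31 := (P *m A3 - C1^T *m S)^T in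
  let Y22 := - (C2^T *m Q *m C2) in
  let Y32 := - (S^T *m C2) in
  let Y33 := - Rm in
  block_mx Y11 (row_mx Y21^T Y31^T) (col_mx Y21 Y31) (block_mx Y22 Y32^T Y32 Y33).

Lemma dissipation_rateE H Q S x pi u :
  dissipation_rate H Q S x pi u =
  qf ((P + P^T) *m x) 1%:M (A1 *m x + A2 *m pi + A3 *m u) + qf x H x
  - supply_rate Q S Rm (C1 *m x + C2 *m pi) u.
Proof. by rewrite /dissipation_rate /supply_rate; ring. Qed.

Lemma qf_dissipation_lmi H Q S x pi u : P^T = P -> Q^T = Q ->
  let xi := col_mx x (col_mx pi u) in
  qf xi (dissipation_lmi H Q S) xi = dissipation_rate H Q S x pi u.
Proof.
move=> sym_P sym_Q xi; rewrite /xi /dissipation_lmi /dissipation_rate.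
rewrite -tr_col_mx !qf_block_sym !qfE mul_col_mx dot_col_mx !dot_trmx_mulr.
rewrite mul1mx sym_P !(mulmxDl, mulmxBl, mulNmx, mulmxDr) -!mulmxA.
rewrite !(dotDl, dotDr, dotNl, dotNr) !dot_trmx_mulr.
have dotPr w : dot x (P *m w) = dot (P *m x) w by rewrite dot_mulr sym_P.
have dotPl w : dot (P *m w) x = dot (P *m x) w by rewrite dot_mull sym_P dotC.
rewrite !dotPr !dotPl ![dot (C1^T *m _) x]dotC !dot_trmx_mulr.
rewrite [dot (C2 *m pi) (Q *m (C1 *m x))]dot_mulr sym_Q.
rewrite [dot (A1 *m x) _]dotC [dot (S *m u) _]dotC [dot (Q *m (C2 *m pi)) _]dotC.
ring.
Qed.

Lemma dissipation_rate_ccomb N (a : 'I_N -> R) H Q S x pi u :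
  \sum_i a i = 1 ->
  dissipation_rate (ccomb a H) (ccomb a Q) (ccomb a S) x pi u =
  \sum_i a i * dissipation_rate (H i) (Q i) (S i) x pi u.
Proof.
move=> sum_a; rewrite /dissipation_rate !qf_ccomb.
set y := C1 *m x + C2 *m pi; set dV := qf _ 1%:M _; set ru := qf u Rm u.
under [RHS]eq_bigr do rewrite !(mulrBr, mulrDr) [_ * dV]mulrC [_ * ru]mulrC mulrCA.
by rewrite !sumrB big_split /= -!mulr_sumr sum_a !mulr1.
Qed.

End DissipationRate.

Definition dar_constraint_mx (R : realType) r n npi m
    (U1 : 'rV[R]_r -> 'M[R]_(npi, n)) (U2 : 'rV[R]_r -> 'M[R]_npi)
    (U3 : 'rV[R]_r -> 'M[R]_(npi, m)) (rho : 'rV[R]_r) : 'M[R]_(npi, n + (npi + m)) :=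
  row_mx (U1 rho) (row_mx (U2 rho) (U3 rho)).

Lemma dar_constraint_solvable (R : realType) n npi m (U1 : 'M[R]_(npi, n))
    (U2 : 'M[R]_npi) (U3 : 'M[R]_(npi, m)) (x : 'cV[R]_n) (u : 'cV[R]_m) :
  U2 \in unitmx -> U1 *m x + U2 *m (- (invmx U2 *m (U1 *m x + U3 *m u))) + U3 *m u = 0.
Proof.
move=> U2_unit; rewrite mulmxN mulmxA mulmxV // mul1mx.
by rewrite opprD addrA addrN add0r addNr.
Qed.

Section RobustDissipativity.
Variables (R : realType) (r N n npi m p : nat) (Omega : set 'rV[R]_r).
Variables (vtx : 'I_N -> 'rV[R]_r) (alpha : 'rV[R]_r -> 'I_N -> R).
Hypothesis alphaP : forall rho, Omega rho ->
  (forall i, 0 <= alpha rho i) /\ \sum_i alpha rho i = 1 /\ rho = ccomb (alpha rho) vtx.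
Variables (A1 : 'M[R]_n) (A2 : 'M[R]_(n, npi)) (A3 : 'M[R]_(n, m)).
Variables (C1 : 'M[R]_(p, n)) (C2 : 'M[R]_(p, npi)).
Variables (U1 : 'rV[R]_r -> 'M[R]_(npi, n)) (U2 : 'rV[R]_r -> 'M[R]_npi).
Variables (U3 : 'rV[R]_r -> 'M[R]_(npi, m)).
Hypotheses (U1_affine : affine_in U1) (U2_affine : affine_in U2)
  (U3_affine : affine_in U3).
Variables (P : 'M[R]_n) (H : 'I_N -> 'M[R]_n) (Rm : 'M[R]_m).
Variables (Q : 'I_N -> 'M[R]_p) (S : 'I_N -> 'M[R]_(p, m)).
Variable L : 'M[R]_(n + (npi + m), npi).

Let Cd i := dar_constraint_mx U1 U2 U3 (vtx i).

Lemma lmi_robust_dissipative : P^T = P -> (forall i, (Q i)^T = Q i) ->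
  (forall i, negdef (dissipation_lmi A1 A2 A3 C1 C2 P Rm (H i) (Q i) (S i)
                     + L *m Cd i + (Cd i)^T *m L^T)) ->
  robust_strict_QSR_dissipative Omega A1 A2 A3 C1 C2 U1 U2 U3 P
    (fun rho => ccomb (alpha rho) H) (fun rho => ccomb (alpha rho) Q)
    (fun rho => ccomb (alpha rho) S) Rm.
Proof.
move=> sym_P sym_Q lmi rho /alphaP [a_ge0 [sum_a rhoE]] x pi u constraint.
set xi := col_mx x (col_mx pi u); set w := L^T *m xi.
pose rate i := dissipation_rate A1 A2 A3 C1 C2 P Rm (H i) (Q i) (S i) x pi u.
have vertex i : rate i + 2 * qf w (Cd i) xi <= 0.
  by have := negdef_qf_le0 xi (lmi i); rewrite qf_add_sym_mulmx qf_dissipation_lmi.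
have cross : \sum_i alpha rho i * qf w (Cd i) xi = 0.
  transitivity (qf w (U1 rho) x + qf w (U2 rho) pi + qf w (U3 rho) u).
    rewrite -(ccomb_affine_in U1_affine sum_a rhoE).
    rewrite -(ccomb_affine_in U2_affine sum_a rhoE).
    rewrite -(ccomb_affine_in U3_affine sum_a rhoE) !qf_ccomb -!big_split /=.
    apply: eq_bigr => i _.
    by rewrite /Cd /dar_constraint_mx !qfE !mul_row_col !dotDr; ring.
  by rewrite !qfE -!dotDr constraint dot0r.
suff : dissipation_rate A1 A2 A3 C1 C2 P Rm (ccomb (alpha rho) H)
    (ccomb (alpha rho) Q) (ccomb (alpha rho) S) x pi u <= 0 by [].
rewrite dissipation_rate_ccomb //.
have : \sum_i alpha rho i * (rate i + 2 * qf w (Cd i) xi) <= 0.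
  by apply: sumr_le0 => i _; exact: mulr_ge0_le0.
under eq_bigr do rewrite mulrDr mulrCA.
by rewrite big_split /= -mulr_sumr cross mulr0 addr0.
Qed.

End RobustDissipativity.

Lemma posdef_unitmx (R : realType) k (M : 'M[R]_k) : posdef M -> M \in unitmx.
Proof.
case=> sym_M pos; rewrite unitmxE unitfE; apply/negP => /det0P [v v_neq0 vM0].
have := pos v^T; rewrite trmx_eq0 => /(_ v_neq0).
by rewrite qfE -sym_M -trmx_mul vM0 trmx0 dot0r ltxx.
Qed.

Section SupplyRate.
Variables (R : realType) (m p : nat) (Rm : 'M[R]_m).

Definition supply_lmi (Q : 'M[R]_p) (S : 'M[R]_(p, m)) (beta : R) : 'M[R]_(p + m) :=
  let Xd := block_mx Q S S^T Rm in
  let Cs := row_mx S^T Rm in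
  let Ls := (row_mx (const_mx beta : 'M[R]_(m, p)) (- 1%:M))^T in
  Xd + Ls *m Cs + Cs^T *m Ls^T.

Lemma qf_supply_lmi Q S beta y :
  let w := (const_mx beta : 'M[R]_(m, p)) *m y in
  qf (col_mx y w) (supply_lmi Q S beta) (col_mx y w) = supply_rate Q S Rm y w.
Proof.
move=> w; rewrite qf_add_sym_mulmx trmxK mul_row_col mulNmx mul1mx subrr qf0l.
by rewrite mulr0 addr0 -[S in block_mx _ S]trmxK qf_block_sym qf_trmx.
Qed.

Lemma supply_rate_ccomb N (a : 'I_N -> R) (Q : 'I_N -> 'M[R]_p)
    (S : 'I_N -> 'M[R]_(p, m)) y u : \sum_i a i = 1 ->
  supply_rate (ccomb a Q) (ccomb a S) Rm y u =
  \sum_i a i * supply_rate (Q i) (S i) Rm y u.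
Proof.
move=> sum_a; rewrite /supply_rate !qf_ccomb.
under [RHS]eq_bigr do rewrite !mulrDr mulrCA [_ * qf u Rm u]mulrC.
by rewrite !big_split /= -!mulr_sumr sum_a mulr1.
Qed.

Lemma supply_rate_completion (Q : 'M[R]_p) (S : 'M[R]_(p, m)) y u w :
  Rm^T = Rm -> Rm *m u = - (S^T *m y) ->
  supply_rate Q S Rm y w = supply_rate Q S Rm y u + qf (w - u) Rm (w - u).
Proof.
move=> sym_R Ru; rewrite /supply_rate !qfE.
have Sr v : dot y (S *m v) = - dot u (Rm *m v).
  by rewrite dot_mulr -[Rm]sym_R -dot_mull Ru dotNl opprK.
rewrite !Sr mulmxBr !(dotDl, dotDr, dotNl, dotNr).
by rewrite [dot w (Rm *m u)]dot_mulr sym_R [dot (Rm *m w) u]dotC; ring.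
Qed.

Lemma ccomb_gain N (a : 'I_N -> R) (S : 'I_N -> 'M[R]_(p, m)) :
  ccomb a (fun i => - (invmx Rm *m (S i)^T)) = - (invmx Rm *m (ccomb a S)^T).
Proof.
rewrite /ccomb linear_sum mulmx_sumr -sumrN; apply: eq_bigr => i _.
by rewrite linearZ /= scalerN scalemxAr.
Qed.

Lemma supply_rate_feedback_le0 N (a : 'I_N -> R) (Q : 'I_N -> 'M[R]_p)
    (S : 'I_N -> 'M[R]_(p, m)) beta y :
  (forall i, 0 <= a i) -> \sum_i a i = 1 -> posdef Rm ->
  (forall i, negdef (supply_lmi (Q i) (S i) beta)) ->
  supply_rate (ccomb a Q) (ccomb a S) Rm y
    (ccomb a (fun i => - (invmx Rm *m (S i)^T)) *m y) <= 0.
Proof.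
move=> a_ge0 sum_a pdR lmi; set K := ccomb a (fun i => - _).
set w := (const_mx beta : 'M[R]_(m, p)) *m y.
have supply_w : supply_rate (ccomb a Q) (ccomb a S) Rm y w <= 0.
  rewrite supply_rate_ccomb //; apply: sumr_le0 => i _; apply: mulr_ge0_le0 => //.
  by have := negdef_qf_le0 (col_mx y w) (lmi i); rewrite qf_supply_lmi.
have RK : Rm *m (K *m y) = - ((ccomb a S)^T *m y).
  rewrite /K ccomb_gain mulNmx mulmxN !mulmxA mulmxV ?mul1mx //.
  exact: posdef_unitmx.
have := posdef_qf_ge0 (w - K *m y) pdR.
by rewrite (supply_rate_completion _ w (proj1 pdR) RK) in supply_w; lra.
Qed.

End SupplyRate.

Section QuadraticFormBounds.
Variable R : realType.

Lemma normr_trmx k l (A : 'M[R]_(k, l)) : `|A^T| = `|A|.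
Proof.
have le_tr k' l' (B : 'M[R]_(k', l')) : `|B^T| <= `|B|.
  rewrite [leLHS]/Num.Def.normr /= mx_normrE; apply: bigmax_le => // -[i j] _ /=.
  by rewrite mxE [leRHS]/Num.Def.normr /= mx_normrE; exact: (le_bigmax _ _ (j, i)).
by apply/le_anti; rewrite le_tr -{1}(trmxK A) le_tr.
Qed.

Lemma trmx_continuous k l : continuous (@trmx R k l).
Proof.
move=> A; apply/(@cvgrPdist_lt _ _ _ (nbhs A) (nbhs_filter A)) => e e0; near=> B.
rewrite -linearB normr_trmx; near: B.
exact: (@cvgr_dist_lt _ _ _ (nbhs A) _ id A cvg_id e e0).
Unshelve. all: by end_near.
Qed.

Lemma unit_sphere_compact k : compact [set v : 'cV[R]_k | `|v| = 1].
Proof.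
have -> : [set v : 'cV[R]_k | `|v| = 1] = trmx @` [set w : 'rV[R]_k | `|w| = 1].
  apply/seteqP; split => [v /= v1 | _ [w /= w1 <-]]; last by rewrite normr_trmx.
  by exists v^T; rewrite /= ?normr_trmx ?trmxK.
apply: continuous_compact; first exact/continuous_subspaceT/trmx_continuous.
apply: bounded_closed_compact.
  by exists 1; split; [exact: num_real | move=> b b1 w /= ->; exact: ltW].
exact: (closed_comp (fun w _ => @norm_continuous _ _ w) (closed_eq (y := 1))).
Qed.

Lemma qf_sum k l (u : 'cV[R]_k) (M : 'M[R]_(k, l)) v :
  qf u M v = \sum_j \sum_i u i 0 * M i j * v j 0.
Proof.
rewrite /qf mxE; apply: eq_bigr => j _; rewrite mxE big_distrl /=.
by apply: eq_bigr => i _; rewrite mxE.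
Qed.

Lemma continuous_sum (T : topologicalType) k (F : 'I_k -> T -> R) x :
  (forall i, {for x, continuous (F i)}) -> {for x, continuous (fun y => \sum_i F i y)}.
Proof.
move=> F_cont; rewrite -fct_sumE; elim/big_ind: _ => //.
- exact: cst_continuous.
- by move=> f g f_cont g_cont; apply: continuousD.
Qed.

Lemma qf_continuous k (M : 'M[R]_k) : continuous (fun v : 'cV[R]_k => qf v M v).
Proof.
have -> : (fun v : 'cV[R]_k => qf v M v) = fun v => \sum_j \sum_i v i 0 * M i j * v j 0.
  by apply/funext => v; rewrite qf_sum.
move=> v0; apply: continuous_sum => j; apply: continuous_sum => i.
apply: continuousM; last exact: coord_continuous.
by apply: continuousM; [exact: coord_continuous | exact: cst_continuous].
Qed.

Lemma normr_normalize k (v : 'cV[R]_k) : v != 0 -> `| `|v|^-1 *: v| = 1.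
Proof.
by move=> v_neq0; rewrite normrZ normrV ?unitfE ?normr_eq0 // normr_id mulVf ?normr_eq0.
Qed.

Lemma qf_normalize k (M : 'M[R]_k) v : v != 0 ->
  qf v M v = `|v| ^+ 2 * qf (`|v|^-1 *: v) M (`|v|^-1 *: v).
Proof.
by move=> v_neq0; rewrite qfZ mulrA -exprMn mulfV ?normr_eq0 // expr1n mul1r.
Qed.

Lemma qf_unit_sphere_bounds k (M : 'M[R]_k) : exists c C,
  (posdef M -> 0 < c) /\ forall v, `|v| = 1 -> c <= qf v M v <= C.
Proof.
have [[v0 v0_neq0] | no_unit] := pselect (exists v : 'cV[R]_k, v != 0); last first.
  exists 1, 1; split => // v v1; case: no_unit; exists v.
  by rewrite -normr_eq0 v1 oner_neq0.
have sphere_ne : [set v : 'cV[R]_k | `|v| = 1] !=set0.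
  by exists (`|v0|^-1 *: v0); exact: normr_normalize.
have qf_cont : {within [set v : 'cV[R]_k | `|v| = 1], continuous (fun v => qf v M v)}.
  exact/continuous_subspaceT/qf_continuous.
have [vm /[!inE] vm1 vm_min] := compact_EVT_min sphere_ne (@unit_sphere_compact k) qf_cont.
have [vM _ vM_max] := compact_EVT_max sphere_ne (@unit_sphere_compact k) qf_cont.
exists (qf vm M vm), (qf vM M vM); split.
  by case=> _; apply; rewrite -normr_eq0 vm1 oner_neq0.
by move=> v v1; rewrite vm_min ?vM_max ?inE.
Qed.

Lemma qf_le_normr k (M : 'M[R]_k) :
  exists2 C, 0 < C & forall v, qf v M v <= C * `|v| ^+ 2.
Proof.
have [c [C [_ bounds]]] := qf_unit_sphere_bounds M.
exists (Num.max 1 C) => [|v]; first by rewrite lt_max ltr01.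
have [->|v_neq0] := eqVneq v 0; first by rewrite qf0l normr0 expr0n mulr0.
rewrite qf_normalize // mulrC ler_wpM2r ?exprn_ge0 //.
have /andP[_ le_C] := bounds _ (normr_normalize v_neq0).
by apply: le_trans le_C _; rewrite le_max lexx orbT.
Qed.

Lemma posdef_qf_ge_normr k (M : 'M[R]_k) : posdef M ->
  exists2 c, 0 < c & forall v, c * `|v| ^+ 2 <= qf v M v.
Proof.
move=> pdM; have [c [C [/(_ pdM) c_gt0 bounds]]] := qf_unit_sphere_bounds M.
exists c => // v; have [->|v_neq0] := eqVneq v 0.
  by rewrite qf0l normr0 expr0n mulr0.
rewrite qf_normalize // mulrC ler_wpM2l ?exprn_ge0 //.
by have /andP[] := bounds _ (normr_normalize v_neq0).
Qed.

Lemma posdef_family_qf_ge_normr N k (M : 'I_N -> 'M[R]_k) :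
  (forall i, posdef (M i)) ->
  exists2 c, 0 < c & forall i v, c * `|v| ^+ 2 <= qf v (M i) v.
Proof.
move=> pdM; have [c c_gt0 le_c] := fin_all_exists2 (fun i => posdef_qf_ge_normr (pdM i)).
exists (\big[Num.min/1]_i c i) => [|i v].
  by elim/big_ind: _ => // a b a_gt0 b_gt0; rewrite lt_min a_gt0.
apply: le_trans (le_c i v); rewrite ler_wpM2r ?exprn_ge0 //.
exact: bigmin_le.
Qed.

End QuadraticFormBounds.

Section Derivatives.
Variable R : realType.

Lemma is_derive_entry k l (f : R -> 'M[R]_(k, l)) t df i j :
  is_derive t (1 : R) f df -> is_derive t (1 : R) (fun s => f s i j) (df i j).
Proof.
move=> [f_derivable f_derive]; apply: DeriveDef.
  by move/derivable_mxP: f_derivable; apply.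
by rewrite -f_derive derive_mx // mxE.
Qed.

Lemma is_derive_qf k (M : 'M[R]_k) (f : R -> 'cV[R]_k) t df :
  is_derive t (1 : R) f df ->
  is_derive t (1 : R) (fun s => qf (f s) M (f s)) (qf df M (f t) + qf (f t) M df).
Proof.
move=> f_der.
have -> : (fun s => qf (f s) M (f s)) =
    \sum_j \sum_i (fun s => f s i 0 * M i j * f s j 0).
  by apply/funext => s; rewrite qf_sum fct_sumE; apply: eq_bigr => j _; rewrite fct_sumE.
apply: is_derive_eq.
  apply: is_derive_sum => j; apply: is_derive_sum => i.
  apply: is_deriveM; last exact: is_derive_entry.
  by apply: is_deriveM; exact: is_derive_entry.
rewrite !qf_sum -big_split /=; apply: eq_bigr => j _.
by rewrite -big_split /=; apply: eq_bigr => i _; rewrite /GRing.scale /=; ring.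
Qed.

Lemma derive_le_decay (f df : R -> R) (g : R) :
  (forall t : R, 0 < t -> is_derive t (1 : R) f (df t)) ->
  (forall t : R, 0 < t -> df t <= - g) ->
  {within `[0, +oo[, continuous f} ->
  forall s t : R, 0 <= s -> s <= t -> f t + g * t <= f s + g * s.
Proof.
move=> f_der df_le f_cont.
have fg_der (t : R) : 0 < t -> is_derive t (1 : R) (fun s => f s + g * s) (df t + g).
  move=> t_gt0; apply: is_deriveD (f_der t t_gt0) _.
  apply: is_derive_eq (is_deriveZ g (is_derive_id t 1)) _.
  by rewrite /GRing.scale /= mulr1.
apply: (@ler0_derive1_nincry R (fun s => f s + g * s) 0).
- by move=> t; rewrite in_itv /= andbT => /fg_der [].
- move=> t; rewrite in_itv /= andbT => t_gt0.
  have fg_der_t := fg_der t t_gt0; rewrite derive1E derive_val.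
  by have := df_le t t_gt0; lra.
- apply: within_continuousD => //.
  by apply: continuous_subspaceT; exact: mulrl_continuous.
Qed.

End Derivatives.

Section Lyapunov.
Variables (R : realType) (r n : nat) (Omega : set 'rV[R]_r).
Variables (M : 'rV[R]_r -> 'M[R]_n) (P : 'M[R]_n) (h : R).
Hypotheses (pdP : posdef P) (h_gt0 : 0 < h).
Hypothesis decay : forall rho, Omega rho -> forall v,
  qf (M rho *m v) P v + qf v P (M rho *m v) <= - (h * `|v| ^+ 2).

Section Trajectory.
Variables (rho : R -> 'rV[R]_r) (x : R -> 'cV[R]_n).
Hypothesis x_sol : lpv_solution Omega M rho x.

Lemma lyapunov_decay g : (forall t, 0 < t -> g <= h * `|x t| ^+ 2) ->
  forall s t, 0 <= s -> s <= t ->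
  qf (x t) P (x t) + g * t <= qf (x s) P (x s) + g * s.
Proof.
case: x_sol => rho_in [x_cont x_der] g_le; apply: derive_le_decay.
- by move=> t t_gt0; apply/is_derive_qf/x_der.
- move=> t t_gt0; apply: le_trans (decay (rho_in t (ltW t_gt0)) (x t)) _.
  by rewrite lerN2; exact: g_le.
- rewrite set_itvcy; apply: (@within_continuous_comp _ _ _ _ x (fun v => qf v P v)) => //.
  by move=> v _; exact: qf_continuous.
Qed.

Lemma lyapunov_nonincreasing s t : 0 <= s -> s <= t ->
  qf (x t) P (x t) <= qf (x s) P (x s).
Proof.
move=> s_ge0 st; have := @lyapunov_decay 0 _ s t s_ge0 st.
rewrite !mul0r !addr0; apply=> t' _.
by rewrite mulr_ge0 ?exprn_ge0 // ltW.
Qed.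

Lemma lyapunov_eventually_lt eta : 0 < eta ->
  exists2 T, 0 <= T & qf (x T) P (x T) < eta.
Proof.
move=> eta_gt0; have [C C_gt0 le_C] := qf_le_normr P.
apply: contrapT => no_T.
have ge_eta t : 0 <= t -> eta <= qf (x t) P (x t).
  by move=> t_ge0; rewrite leNgt; apply/negP => lt_eta; apply: no_T; exists t.
(* Otherwise [V' <= - g] on [0, +oo[ and [V] would be negative at [t1]. *)
pose g := h * eta / C.
have g_gt0 : 0 < g by rewrite divr_gt0 ?mulr_gt0.
have g_le t : 0 < t -> g <= h * `|x t| ^+ 2.
  move=> t_gt0; rewrite /g ler_pdivrMr // -mulrA ler_wpM2l ?(ltW h_gt0) // mulrC.
  exact: le_trans (ge_eta t (ltW t_gt0)) (le_C _).
pose t1 := qf (x 0) P (x 0) / g + 1.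
have V0_ge0 := posdef_qf_ge0 (x 0) pdP.
have t1_ge0 : 0 <= t1 by rewrite addr_ge0 // divr_ge0 // ltW.
have gt1 : g * t1 = qf (x 0) P (x 0) + g.
  by rewrite /t1 mulrDr mulrCA mulfV ?gt_eqF // !mulr1.
have := lyapunov_decay g_le (lexx 0) t1_ge0; have := ge_eta t1 t1_ge0.
rewrite gt1 mulr0 addr0; lra.
Qed.

End Trajectory.

Lemma lyapunov_stable e : 0 < e -> exists2 d, 0 < d &
  forall rho x, lpv_solution Omega M rho x -> `|x 0| < d ->
  forall t, 0 <= t -> `|x t| < e.
Proof.
move=> e_gt0; have [c c_gt0 le_c] := posdef_qf_ge_normr pdP.
have [C C_gt0 le_C] := qf_le_normr P.
pose k := Num.min 1 (c / C).
have k_gt0 : 0 < k by rewrite lt_min ltr01 divr_gt0.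
have k_le1 : k <= 1 by rewrite ge_min lexx.
have Ck_le : C * k <= c.
  have k_le : k <= c / C by rewrite ge_min lexx orbT.
  by rewrite -(ler_pM2l C_gt0) mulrCA mulfV ?gt_eqF // mulr1 in k_le.
exists (e * k) => [|rho x x_sol x0_lt t t_ge0]; first exact: mulr_gt0.
have Cx0 : C * `|x 0| ^+ 2 < c * e ^+ 2.
  have Cx0_lt : C * `|x 0| ^+ 2 < C * (e * k) ^+ 2.
    by rewrite ltr_pM2l // ltr_pXn2r // ?nnegrE // ltW // mulr_gt0.
  apply: lt_le_trans Cx0_lt _.
  have e2_gt0 : 0 < e ^+ 2 by rewrite exprn_gt0.
  have : 0 <= (c - C * k) * (k * e ^+ 2).
    by rewrite mulr_ge0 ?subr_ge0 // ltW // mulr_gt0.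
  have : 0 <= c * e ^+ 2 * (1 - k) by rewrite mulr_ge0 ?subr_ge0 // ltW // mulr_gt0.
  rewrite exprMn; nra.
have : c * `|x t| ^+ 2 < c * e ^+ 2.
  apply: le_lt_trans (le_c _) _; apply: le_lt_trans Cx0.
  exact: le_trans (lyapunov_nonincreasing x_sol (lexx 0) t_ge0) (le_C _).
by rewrite ltr_pM2l // ltr_pXn2r // ?nnegrE // ltW.
Qed.

Lemma lyapunov_attractive rho x : lpv_solution Omega M rho x ->
  x t @[t --> +oo] --> (0 : 'cV[R]_n).
Proof.
move=> x_sol; have [c c_gt0 le_c] := posdef_qf_ge_normr pdP.
apply/cvgrPdist_lt => eps eps_gt0.
have [T T_ge0 VT_lt] := lyapunov_eventually_lt x_sol (mulr_gt0 c_gt0 (exprn_gt0 2 eps_gt0)).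
near=> t; have T_le : T <= t by near: t; apply: nbhs_pinfty_ge; exact: num_real.
have VT_le := lyapunov_nonincreasing x_sol T_ge0 T_le.
have := le_lt_trans (le_c _) (le_lt_trans VT_le VT_lt).
rewrite ltr_pM2l // sub0r normrN => lt_sq.
by rewrite -(ltr_pXn2r (n := 2)) // ?nnegrE // ltW.
Unshelve. all: by end_near.
Qed.

Lemma lyapunov_asymptotically_stable : lpv_asymptotically_stable Omega M.
Proof. by split; [exact: lyapunov_stable | exact: lyapunov_attractive]. Qed.

End Lyapunov.

Theorem theorem1 (R : realType) (r n npi m p : nat)
  (Omega : set 'rV[R]_r) (vtx : 'I_(2 ^ r) -> 'rV[R]_r)
  (alpha : 'rV[R]_r -> 'I_(2 ^ r) -> R)
  (Halpha : forall rho, Omega rho ->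
     (forall i, 0 <= alpha rho i) /\ \sum_i alpha rho i = 1 /\
     rho = ccomb (alpha rho) vtx)
  (A : 'rV[R]_r -> 'M[R]_n) (B : 'rV[R]_r -> 'M[R]_(n, m))
  (C : 'rV[R]_r -> 'M[R]_(p, n))
  (A1 : 'M[R]_n) (A2 : 'M[R]_(n, npi)) (A3 : 'M[R]_(n, m))
  (C1 : 'M[R]_(p, n)) (C2 : 'M[R]_(p, npi))
  (U1 : 'rV[R]_r -> 'M[R]_(npi, n)) (U2 : 'rV[R]_r -> 'M[R]_npi)
  (U3 : 'rV[R]_r -> 'M[R]_(npi, m))
  (hU1 : affine_in U1) (hU2 : affine_in U2) (hU3 : affine_in U3)
  (hU2inv : forall rho, Omega rho -> U2 rho \in unitmx)
  (hexact : forall rho, Omega rho ->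
     forall (x : 'cV[R]_n) (pi : 'cV[R]_npi) (u : 'cV[R]_m),
       U1 rho *m x + U2 rho *m pi + U3 rho *m u = 0 ->
       A1 *m x + A2 *m pi + A3 *m u = A rho *m x + B rho *m u /\
       C1 *m x + C2 *m pi = C rho *m x)
  (beta : R)
  (P : 'M[R]_n) (H : 'I_(2 ^ r) -> 'M[R]_n) (Rm : 'M[R]_m)
  (Q : 'I_(2 ^ r) -> 'M[R]_p) (S : 'I_(2 ^ r) -> 'M[R]_(p, m))
  (L : 'M[R]_(n + (npi + m), npi))
  (hP : posdef P) (hH : forall i, posdef (H i)) (hR : posdef Rm)
  (hQ : forall i, (Q i)^T = Q i)
  (hLMI1 : forall i,
     let Cd := row_mx (U1 (vtx i)) (row_mx (U2 (vtx i)) (U3 (vtx i))) in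
     let Y11 := P *m A1 + A1^T *m P - C1^T *m Q i *m C1 + H i in
     let Y21 := (P *m A2 - C1^T *m Q i *m C2)^T in
     let Y31 := (P *m A3 - C1^T *m S i)^T in
     let Y22 := - (C2^T *m Q i *m C2) in
     let Y32 := - ((S i)^T *m C2) in
     let Y33 := - Rm in
     let Y := block_mx Y11 (row_mx Y21^T Y31^T)
                       (col_mx Y21 Y31) (block_mx Y22 Y32^T Y32 Y33) in
     negdef (Y + L *m Cd + Cd^T *m L^T))
  (hLMI2 : forall i,
     let Xd := block_mx (Q i) (S i) (S i)^T Rm in
     let Cs := row_mx (S i)^T Rm in
     let Ls := (row_mx (const_mx beta : 'M[R]_(m, p)) (- 1%:M))^T in
     negdef (Xd + Ls *m Cs + Cs^T *m Ls^T)) :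
  let Hr rho := ccomb (alpha rho) H in
  let Qr rho := ccomb (alpha rho) Q in
  let Sr rho := ccomb (alpha rho) S in
  let K rho := ccomb (alpha rho) (fun i => - (invmx Rm *m (S i)^T)) in
  robust_strict_QSR_dissipative Omega A1 A2 A3 C1 C2 U1 U2 U3 P Hr Qr Sr Rm /\
  lpv_asymptotically_stable Omega (fun rho => A rho + B rho *m K rho *m C rho).
Proof.
move=> Hr Qr Sr K.
have sym_P : P^T = P by case: hP.
have dissipative := lmi_robust_dissipative Halpha hU1 hU2 hU3 sym_P hQ hLMI1.
split; first exact: dissipative.
have [h h_gt0 h_le] := posdef_family_qf_ge_normr hH.
apply: (lyapunov_asymptotically_stable hP h_gt0) => rho rho_in v.
have [a_ge0 [sum_a _]] := Halpha rho rho_in.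
set u := K rho *m (C rho *m v).
set pi := - (invmx (U2 rho) *m (U1 rho *m v + U3 rho *m u)).
have constraint : U1 rho *m v + U2 rho *m pi + U3 rho *m u = 0.
  exact: dar_constraint_solvable (hU2inv rho rho_in).
have [Ax Cx] := hexact rho rho_in _ _ _ constraint.
have : dissipation_rate A1 A2 A3 C1 C2 P Rm (Hr rho) (Qr rho) (Sr rho) v pi u <= 0.
  exact: dissipative rho rho_in v pi u constraint.
rewrite dissipation_rateE Ax Cx.
have supply_le0 : supply_rate (Qr rho) (Sr rho) Rm (C rho *m v) u <= 0.
  have lmi2 : forall i, negdef (supply_lmi Rm (Q i) (S i) beta) := hLMI2.
  exact: supply_rate_feedback_le0 (C rho *m v) a_ge0 sum_a hR lmi2.
have Hv_ge : h * `|v| ^+ 2 <= qf v (Hr rho) v.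
  by rewrite qf_ccomb; apply: convex_sum_ge.
have closed_loop : (A rho + B rho *m K rho *m C rho) *m v = A rho *m v + B rho *m u.
  by rewrite mulmxDl -!mulmxA.
rewrite qf_mulmx_sym closed_loop; lra.
Qed.
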